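(* Assume the zero-derivation setting $\delta=0$ and write $\mathbb{F}_{q^m}[x;\theta]$ for the skew polynomial ring. Let $s\ge1$, $\boldsymbol\xi=(\xi_1,\dots,\xi_\ell)$ representatives of pairwise distinct nontrivial conjugacy classes, $\mathbf n$ a length partition of $n$, $\boldsymbol\beta_1,\dots,\boldsymbol\beta_s\in\mathbb{F}_{q^m}^n$ with each block having $\mathbb{F}_q$-linearly independent entries, and $\mathbf c$ a codeword of the corresponding HILRS code of interleaving order $s$ and dimension $sk$ with message-polynomial vector $(f_1,\dots,f_s)$. Let $\mathbf y=\mathbf c+\mathbf e$ with $\mathrm{wt}_{\Sigma R}(\mathbf e)=t\le\frac{s}{s+1}(n-k)$, let $\sigma$ be the error-span polynomial of $\mathbf e$, and let $G_j,R_j$ ($j=1,\dots,s$) be the minimal and interpolation polynomials defined in the context. Let $\chi_1,\dots,\chi_s\in\mathbb{F}_{q^m}[x;\theta]$ be the skew polynomials with $\sigma f_j=\chi_jG_j+\sigma R_j$ for all $j$. Put $$\mathbf W=\begin{pmatrix}-\mathbf I_s\\ \mathbf R\\ \mathbf G\end{pmatrix}\in\mathbb{F}_{q^m}[x;\theta]^{(2s+1)\times s},\quad \mathbf R=(R_1,\dots,R_s),\ \mathbf G=\mathrm{diag}(G_1,\dots,G_s),$$ $\boldsymbol\rho=(\sigma f_1,\dots,\sigma f_s,\sigma)$, $\boldsymbol\chi=(\chi_1,\dots,\chi_s)$, $\mathbf w=(0,\dots,0,k-1)\in\mathbb Z^{s+1}$, $\mathbf v=(0,\dots,0,k-1,0,\dots,0)\in\mathbb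 Z^{2s+1}$ (the entry $k-1$ in position $s+1$), $D=\frac{s}{s+1}(n-k)$ and $d=D+n$. Then $$(\boldsymbol\rho\mid\boldsymbol\chi)\mathbf W=\mathbf 0\ \text{ and }\ \mathrm{rdeg}_{\mathbf w}(\boldsymbol\rho)<D$$ if and only if $$(\boldsymbol\rho\mid\boldsymbol\chi)\mathbf W\equiv\mathbf 0\bmod_r x^d\ \text{ and }\ \mathrm{rdeg}_{\mathbf v}(\boldsymbol\rho\mid\boldsymbol\chi)<D.$$
   Context: $q$ a prime power, $m\ge1$, $\theta$ an automorphism of $\mathbb{F}_{q^m}$ with fixed field $\mathbb{F}_q$. $\mathbb{F}_{q^m}[x;\theta]$: skew polynomials $\sum_if_ix^{i-1}$ with multiplication rule $xa=\theta(a)x$. Elements $a,b$ are conjugate if $b=\theta(c)ac^{-1}$ for some $c\ne0$; the class of $0$ is trivial. Generalized operator evaluation: $\mathcal D_a(b)=\theta(b)a$, $\mathcal D_a^0(b)=b$, $\mathcal D_a^i=\mathcal D_a\circ\mathcal D_a^{i-1}$, $f(b)_a=\sum_if_i\mathcal D_a^{i-1}(b)$; a length partition $\mathbf n=(n_1,\dots,n_\ell)$ of $n$ splits vectors into blocks $\mathbf x^{(i)}\in\mathbb{F}_{q^m}^{n_i}$, and $f(\mathbf x)_{\mathbf a}=(f(\mathbf x^{(1)})_{a_1}\mid\dots\mid f(\mathbf x^{(\ell)})_{a_\ell})$ entrywise. HILRS code: all $(\mathbf c_1\mid\dots\mid\mathbf c_s)\in\mathbb{F}_{q^m}^{sn}$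 with $\mathbf c_j=f_j(\boldsymbol\beta_j)_{\boldsymbol\xi}$ for some $f_j$ of degree $<k$; $(f_1,\dots,f_s)$ is the message-polynomial vector. Sum-rank weight of $\mathbf x=(\mathbf x_1\mid\dots\mid\mathbf x_s)$: $\sum_i\mathrm{rk}_q(\mathbf x_1^{(i)}\mid\dots\mid\mathbf x_s^{(i)})$ ($\mathrm{rk}_q$ = max number of $\mathbb{F}_q$-linearly independent entries). Error values: with $t_i=\mathrm{rk}_q(\mathbf e_1^{(i)}\mid\dots\mid\mathbf e_s^{(i)})$, choose $\mathbf a^{(i)}\in\mathbb{F}_{q^m}^{t_i}$ with $\mathbb{F}_q$-linearly independent entries and $\mathbf B_j^{(i)}\in\mathbb{F}_q^{t_i\times n_i}$ with $\mathbf e_j^{(i)}=\mathbf a^{(i)}\mathbf B_j^{(i)}$ and $\mathrm{rk}(\mathbf B_1^{(i)}\mid\dots\mid\mathbf B_s^{(i)})=t_i$; the error-span polynomial $\sigma$ is the monic nonzero skew polynomial of least degree with $\sigma(\mathbf a^{(i)})_{\xi_i}=\mathbf 0$ for all $i$. $G_j$ is the monic nonzero skew polynomial of least degree with $G_j(\boldsymbol\beta_j)_{\boldsymbol\xi}=\mathbf 0$; $R_j$ is the unique skew polynomial of degree $<n$ with $R_j(\boldsymbol\beta_j)_{\boldsymbol\xi}=\mathbf y_j$. For a shift $\mathbf v\in\mathbb Z^a$ and $\mathbf b\in\mathbb{F}_{q^m}[x;\theta]^a$, the $\mathbf v$-shifted row degree is $\mathrm{rdeg}_{\mathbf v}(\mathbf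 b)=\max_j(\deg b_j+v_j)$ (with $\deg 0=-\infty$). For a vector, $\equiv\mathbf 0\bmod_r x^d$ means every entry has remainder $0$ upon right division by $x^d$. *)

(* Skew polynomials F_{q^m}[x;theta] (delta = 0) are represented
   by their coefficient lists, i.e. by {poly L} used only as a coefficient carrier,
   equipped with the skew multiplication [skmul] (x a = theta(a) x). *)
From HB Require Import structures.
From mathcomp Require Import all_boot all_order all_algebra.
Set Implicit Arguments. Unset Strict Implicit. Unset Printing Implicit Defensive.
Import Order.TTheory GRing.Theory Num.Theory.
Local Open Scope ring_scope.

Section Skew.
Variable L : finFieldType.
Variable th : {rmorphism L -> L}.

Definition skmul (f g : {poly L}) : {poly L} :=
  \poly_(k < (size f + size g).-1) \sum_(i < k.+1) f`_i * iter i th g`_(k - i).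

Definition Dop (a : L) (i : nat) (b : L) : L := iter i (fun z => th z * a) b.
Definition skev (f : {poly L}) (b a : L) : L := \sum_(i < size f) f`_i * Dop a i b.
Definition skevrow N (f : {poly L}) (x : 'rV[L]_N) (a : L) : 'rV[L]_N :=
  \row_p skev f (x 0 p) a.

Definition conjugate (a b : L) : Prop := exists c, c != 0 /\ b = th c * a / c.

(* the fixed field F_q of theta *)
Definition fixedb (a : L) : bool := th a == a.

Definition fq_indep (v : seq L) : bool :=
  [forall c : (size v).-tuple L,
     (all fixedb c && (\sum_(i < size v) c`_i * v`_i == 0)) ==> all (eq_op^~ 0) c].

Definition rkq (I : finType) (x : I -> L) : nat :=
  \max_(S : {set I} | fq_indep [seq x i | i <- enum S]) #|S|.

Definition sr_wt (s l : nat) (nn : 'I_l -> nat)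
    (e : 'I_s -> forall i : 'I_l, 'rV[L]_(nn i)) : nat :=
  \sum_(i < l) rkq (fun p : 'I_s * 'I_(nn i) => e p.1 i ord0 p.2).

Definition rmod_zero (d : nat) (f : {poly L}) : Prop :=
  exists Q : {poly L}, f = skmul Q 'X^d.

Definition vecmul a s (u : 'I_a -> {poly L}) (W : 'I_a -> 'I_s -> {poly L})
  : 'I_s -> {poly L} := fun j => \sum_(r < a) skmul (u r) (W r j).

Definition rho_vec s (sigma : {poly L}) (f : 'I_s -> {poly L}) : 'I_s.+1 -> {poly L} :=
  fun r => if insub (val r) is Some j then skmul sigma (f j) else sigma.

Definition rhochi_vec s (sigma : {poly L}) (f chi : 'I_s -> {poly L})
  : 'I_(2 * s).+1 -> {poly L} :=
  fun r => if insub (val r) is Some j then skmul sigma (f j)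
           else if val r == s then sigma
           else if insub (val r - s.+1)%N is Some j then chi j else 0.
End Skew.

(* shifted row degree strictly below D (deg 0 = -oo) :
   rdeg_v(b) = max_j (deg b_j + v_j) < D *)
Definition rdeg_lt (L : fieldType) a (v : 'I_a -> int) (b : 'I_a -> {poly L}) (D : rat)
  : Prop :=
  forall j, b j != 0 -> (((size (b j)).-1)%:Z + v j)%:~R < D.

Definition W_mat (L : fieldType) s (R G : 'I_s -> {poly L}) : 'I_(2 * s).+1 -> 'I_s -> {poly L} :=
  fun r j => if (val r < s)%N then (if val r == val j then -1 else 0)
             else if val r == s then R j
             else if (val r - s.+1)%N == val j then G j else 0.

Definition w_shift s (k : nat) : 'I_s.+1 -> int :=
  fun r => if val r == s then k%:Z - 1 else 0.
(* v = (0,...,0,k-1,0,...,0) in Z^(2s+1), k-1 in position s+1 (1-indexed) *)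
Definition v_shift s (k : nat) : 'I_(2 * s).+1 -> int :=
  fun r => if val r == s then k%:Z - 1 else 0.

From HB Require Import structures.
From mathcomp Require Import all_boot all_order all_algebra.
From mathcomp Require Import ring zify.
Import Order.TTheory GRing.Theory Num.Theory.
Local Open Scope ring_scope.

(* Each entry of (rho | chi) W equals -sigma f_j + sigma R_j + chi_j G_j, which vanishes
   by the definition of chi_j, so both sides reduce to their degree conditions and the
   v-shifted one only adds deg chi_j < D.  As chi_j G_j = sigma (f_j - R_j) with
   deg R_j < n, this follows from deg G_j >= n: either deg chi_j <= deg (sigma f_j) < D,
   or deg chi_j < deg sigma <= deg sigma + k - 1 < D.

   deg G_j >= n is the skew analogue of "a nonzero polynomial has fewer roots than its
   size".  If g vanishes at b <> 0 with respect to a, then g = h (x - c) with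
   c = theta(b) a / b, and h vanishes at the images of the other roots under
   z |-> theta(z) a' - c z.  This map is F_q-linear; for a' = a its kernel is F_q b, and
   for a' not conjugate to a it is injective.  So F_q-independence within each conjugacy
   class survives, and induction on the number of roots applies. *)

Section SkewPolynomials.
Variables (L : finFieldType) (th : {rmorphism L -> L}).
Implicit Types (g h p q : {poly L}) (a b c u x y z : L).

Lemma iter_th0 i : iter i th 0 = 0.
Proof. by elim: i => //= i ->; rewrite rmorph0. Qed.

Lemma iter_thN1 i : iter i th (-1) = -1.
Proof. by elim: i => //= i ->; rewrite rmorphN1. Qed.

Lemma iter_th_eq0 i x : (iter i th x == 0) = (x == 0).
Proof. by elim: i => //= i <-; rewrite fmorph_eq0. Qed.

Lemma DopSr a i b : Dop th a i.+1 b = Dop th a i (th b * a).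
Proof. exact: iterSr. Qed.

Lemma Dop0 a i : Dop th a i 0 = 0.
Proof. by rewrite /Dop; elim: i => //= i ->; rewrite rmorph0 mul0r. Qed.

Lemma DopD a i x y : Dop th a i (x + y) = Dop th a i x + Dop th a i y.
Proof. by rewrite /Dop; elim: i => //= i ->; rewrite rmorphD mulrDl. Qed.

Lemma DopN a i x : Dop th a i (- x) = - Dop th a i x.
Proof. by rewrite /Dop; elim: i => //= i ->; rewrite rmorphN mulNr. Qed.

Lemma DopM a i u z : Dop th a i (u * z) = iter i th u * Dop th a i z.
Proof. by rewrite /Dop; elim: i => //= i ->; rewrite rmorphM mulrA. Qed.

Lemma skev_widen g z a N : (size g <= N)%N ->
  skev th g z a = \sum_(i < N) g`_i * Dop th a i z.
Proof.
move=> le_gN; rewrite /skev (big_ord_widen _ (fun i => g`_i * Dop th a i z) le_gN).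
rewrite big_mkcond; apply: eq_bigr => i _.
by case: ltnP => // /(nth_default 0) ->; rewrite mul0r.
Qed.

Lemma skev0 z a : skev th 0 z a = 0.
Proof. by rewrite /skev size_poly0 big_ord0. Qed.

Lemma skev_at0 g a : skev th g 0 a = 0.
Proof. by apply: big1 => i _; rewrite Dop0 mulr0. Qed.

Lemma skevD p q z a : skev th (p + q) z a = skev th p z a + skev th q z a.
Proof.
rewrite !(@skev_widen _ _ _ (maxn (size p) (size q))) ?leq_maxl ?leq_maxr ?size_polyD //.
by rewrite -big_split; apply: eq_bigr => i _; rewrite coefD mulrDl.
Qed.

Lemma skevN p z a : skev th (- p) z a = - skev th p z a.
Proof.
rewrite !(@skev_widen _ _ _ (size p)) ?size_polyN //.
by rewrite -sumrN; apply: eq_bigr => i _; rewrite coefN mulNr.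
Qed.

Lemma skevZXn u d z a : skev th (u *: 'X^d) z a = u * Dop th a d z.
Proof.
rewrite (@skev_widen _ _ _ d.+1); last by rewrite (leq_trans (size_scale_leq _ _)) ?size_polyXn.
rewrite big_ord_recr /= big1 ?add0r => [|i _]; first by rewrite coefZ coefXn eqxx mulr1.
by rewrite coefZ coefXn ltn_eqF ?mulr0 ?mul0r.
Qed.

(* The operator evaluation (x - c)(z)_a. *)
Definition evXsubC c a z := th z * a - c * z.

(* Right division of g by x - c, read through operator evaluation. *)
Lemma skev_divXsubC c g : exists h r, size h = (size g).-1 /\
  forall a z, skev th g z a = skev th h (evXsubC c a z) a + r * z.
Proof.
have [n le_gn] : exists n, (size g <= n.+1)%N by exists (size g).
elim: n g le_gn => [|n IH] g le_gn.
  exists 0, g`_0; split; first by rewrite size_poly0; case: (size g) le_gn => [|[]].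
  by move=> a z; rewrite skev0 add0r (skev_widen _ _ _ _ le_gn) big_ord1.
have [/IH // | lt_ng] := leqP (size g) n.+1.
have size_g : size g = n.+2 by apply/eqP; rewrite eqn_leq le_gn.
set lc := lead_coef g.
have lc0 : lc != 0 by rewrite lead_coef_eq0 -size_poly_eq0 size_g.
have [g' def_g size_g'] :
    exists2 g', g = g' + lc *: 'X^(n.+1) - (lc * iter n th c) *: 'X^n & (size g' <= n.+1)%N.
  exists (g - lc *: 'X^(n.+1) + (lc * iter n th c) *: 'X^n); first by ring.
  apply/leq_sizeP => j le_nj; rewrite !coefD coefN !coefZ !coefXn (gtn_eqF le_nj) mulr0 addr0.
  have [->|ne_j] := eqVneq j n.+1; first by rewrite mulr1 /lc lead_coefE size_g subrr.
  by rewrite mulr0 subr0 nth_default // size_g; lia.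
have [h' [r' [size_h' ev_g']]] := IH g' size_g'.
exists (lc *: 'X^n + h'), r'; split.
  by rewrite size_polyDl size_scale // size_polyXn ?size_g // size_h'; lia.
move=> a z; rewrite {1}def_g !skevD skevN !skevZXn ev_g' /evXsubC DopD DopN -DopSr DopM; ring.
Qed.

Lemma skmulr0 p : skmul th p 0 = 0.
Proof.
apply/polyP => i; rewrite coef_poly coef0; case: ifP => // _.
by apply: big1 => j _; rewrite coef0 iter_th0 mulr0.
Qed.

Lemma skmul0r q : skmul th 0 q = 0.
Proof.
apply/polyP => i; rewrite coef_poly coef0; case: ifP => // _.
by apply: big1 => j _; rewrite coef0 mul0r.
Qed.

Lemma skmulrN1 p : skmul th p (-1) = - p.
Proof.
apply/polyP => i; rewrite coef_poly coefN size_polyN size_poly1 addn1 /=.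
case: ltnP => [lt_ip | le_pi]; last by rewrite nth_default ?oppr0.
rewrite big_ord_recr /= subnn coefN coef1 eqxx iter_thN1 mulrN1 big1 ?add0r // => j _.
by rewrite coefN coef1 subn_eq0 leqNgt ltn_ord oppr0 iter_th0 mulr0.
Qed.

Lemma size_skmul p q : p != 0 -> q != 0 -> size (skmul th p q) = (size p + size q).-1.
Proof.
move=> p0 q0; rewrite /skmul size_poly_eq //.
set dp := (size p).-1; set dq := (size q).-1.
have size_p : size p = dp.+1 by rewrite /dp prednK // size_poly_gt0.
have size_q : size q = dq.+1 by rewrite /dq prednK // size_poly_gt0.
have -> : (size p + size q).-1.-1 = (dp + dq)%N by rewrite size_p size_q; lia.
have lt_dp : (dp < (dp + dq).+1)%N by lia.
rewrite (bigD1 (Ordinal lt_dp)) //= big1 ?addr0 => [|j /eqP ne_j].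
  by rewrite addKn mulf_neq0 ?iter_th_eq0 -?lead_coefE ?lead_coef_eq0.
have [lt_j | gt_j | eq_j] := ltngtP j dp; last by case: ne_j; apply: val_inj.
  by rewrite (@nth_default _ _ q) ?iter_th0 ?mulr0 // size_q; lia.
by rewrite nth_default ?mul0r // size_p.
Qed.

Definition fq_free (v : seq L) : Prop :=
  forall k : seq L, size k = size v -> all (fixedb th) k ->
    \sum_(i < size v) k`_i * v`_i = 0 -> all (eq_op^~ 0) k.

Lemma fq_indep_free v : fq_indep th v -> fq_free v.
Proof.
move=> /forallP indep_v k size_k fixed_k sum_k.
have size_k' : size k == size v by apply/eqP.
by have := indep_v (Tuple size_k'); rewrite /= fixed_k sum_k eqxx.
Qed.

Lemma fq_free_head_neq0 b v : fq_free (b :: v) -> b != 0.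
Proof.
move=> free_bv; apply/eqP => b0.
have := free_bv (1 :: nseq (size v) 0); rewrite /= size_nseq => /(_ erefl).
have -> : all (fixedb th) (nseq (size v) 0).
  by apply/allP => x; rewrite mem_nseq => /andP[_ /eqP ->]; rewrite /fixedb rmorph0.
rewrite /fixedb rmorph1 eqxx big_ord_recl /= b0 mulr0 add0r big1 => [|i _].
  by move=> /(_ isT erefl); rewrite oner_eq0.
by rewrite /= nth_nseq; case: ifP; rewrite mul0r.
Qed.

Definition fq_linear (phi : L -> L) : Prop :=
  {morph phi : x y / x + y} /\ forall u z, fixedb th u -> phi (u * z) = u * phi z.

Lemma fq_linear_sum phi v k : fq_linear phi -> all (fixedb th) k -> size k = size v ->
  \sum_(i < size v) k`_i * (map phi v)`_i = phi (\sum_(i < size v) k`_i * v`_i).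
Proof.
move=> [phiD phiZ] fixed_k size_k.
have phi0 : phi 0 = 0 by rewrite -(mul0r 0) phiZ ?mul0r // /fixedb rmorph0.
rewrite (big_morph phi phiD phi0); apply: eq_bigr => i _.
by rewrite (nth_map 0) // phiZ //; apply: (allP fixed_k); rewrite mem_nth ?size_k.
Qed.

Lemma fq_free_map_inj phi v : fq_free v -> fq_linear phi ->
  (forall z, phi z = 0 -> z = 0) -> fq_free (map phi v).
Proof.
move=> free_v lin_phi ker_phi k; rewrite size_map => size_k fixed_k.
by rewrite fq_linear_sum // => /ker_phi; apply: free_v.
Qed.

Lemma fq_free_map_ker phi b v : fq_free (b :: v) -> fq_linear phi ->
  (forall z, phi z = 0 -> exists2 u, fixedb th u & z = u * b) -> fq_free (map phi v).
Proof.
move=> free_bv lin_phi ker_phi k; rewrite size_map => size_k fixed_k.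
rewrite fq_linear_sum // => /ker_phi[u fixed_u def_u].
have := free_bv (- u :: k); rewrite /= size_k => /(_ erefl).
rewrite fixed_k andbT /fixedb rmorphN (eqP fixed_u) eqxx big_ord_recl /=.
by rewrite def_u mulNr addNr => /(_ isT erefl) /andP[].
Qed.

Lemma evXsubC_fq_linear c a : fq_linear (evXsubC c a).
Proof.
rewrite /evXsubC; split=> [x y | u z /eqP fixed_u].
  by rewrite rmorphD; ring.
by rewrite rmorphM fixed_u; ring.
Qed.

Lemma evXsubC_conj_root a b : b != 0 -> evXsubC (th b * a / b) a b = 0.
Proof. by move=> b0; rewrite /evXsubC divfK ?subrr. Qed.

Lemma evXsubC_conj_ker a b z : a != 0 -> b != 0 ->
  evXsubC (th b * a / b) a z = 0 -> fixedb th (z / b).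
Proof.
move=> a0 b0 /eqP; rewrite subr_eq0 => /eqP th_z.
have thb0 : th b != 0 by rewrite fmorph_eq0.
apply/eqP; rewrite fmorph_div /=.
have -> : th z = th b * z / b by apply: (mulIf a0); rewrite th_z; ring.
by field; rewrite b0 thb0.
Qed.

Lemma evXsubC_conj_inj a a' b z : b != 0 -> z != 0 ->
  evXsubC (th b * a / b) a' z = 0 -> conjugate th a a'.
Proof.
move=> b0 z0 /eqP; rewrite subr_eq0 => /eqP th_z.
have thz0 : th z != 0 by rewrite fmorph_eq0.
exists (b / z); split; first by rewrite mulf_neq0 ?invr_eq0.
rewrite fmorph_div /=; apply: (mulIf thz0); rewrite [LHS]mulrC th_z.
by field; rewrite z0 b0 thz0.
Qed.

Lemma skev_root_factor g a b : g != 0 -> b != 0 -> skev th g b a = 0 ->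
  exists h, [/\ h != 0, size g = (size h).+1 &
    forall a' z, skev th g z a' = skev th h (evXsubC (th b * a / b) a' z) a'].
Proof.
move=> g0 b0 gb0; have [h [r [size_h ev_g]]] := skev_divXsubC (th b * a / b) g.
have r0 : r = 0.
  move/eqP: gb0; rewrite ev_g evXsubC_conj_root // skev_at0 add0r mulf_eq0.
  by rewrite (negbTE b0) orbF => /eqP.
have lt1g : (1 < size g)%N.
  rewrite ltnNge; apply/negP => le_g1; move/eqP: gb0; apply/negP.
  have size_g1 : size g = 1%N by apply/eqP; rewrite eqn_leq le_g1 size_poly_gt0.
  rewrite (skev_widen _ _ _ _ le_g1) big_ord1 mulf_neq0 //.
  by rewrite -lead_coef_eq0 lead_coefE size_g1 in g0.
exists h; split; first by rewrite -size_poly_gt0 size_h; lia.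
  by rewrite size_h; lia.
by move=> a' z; rewrite ev_g r0 mul0r addr0.
Qed.

Theorem max_skew_poly_roots l (xi : 'I_l -> L) :
  (forall i, xi i != 0) -> (forall i j, i != j -> ~ conjugate th (xi i) (xi j)) ->
  forall (bs : 'I_l -> seq L) g, (forall i, fq_free (bs i)) ->
  (forall i z, z \in bs i -> skev th g z (xi i) = 0) -> g != 0 ->
  (\sum_(i < l) size (bs i) < size g)%N.
Proof.
move=> xi0 xi_nconj bs g; move Nbs : (\sum_(i < l) size (bs i))%N => N.
elim: N bs g Nbs => [|N IH] bs g Nbs free_bs roots_g g0; first by rewrite size_poly_gt0.
have [i0 /= nz_i0 | all0] := pickP (fun i => 0 < size (bs i))%N; last first.
  by move: Nbs; rewrite big1 // => i _; apply/eqP; rewrite -leqn0 leqNgt all0.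
case def_i0 : (bs i0) nz_i0 => [// | b rest] _.
have b0 : b != 0 by apply: (@fq_free_head_neq0 _ rest); rewrite -def_i0.
have [|h [h0 -> ev_g]] := skev_root_factor g (xi i0) b g0 b0.
  by apply: roots_g; rewrite def_i0 mem_head.
set c := th b * xi i0 / b in ev_g.
pose bs' i := map (evXsubC c (xi i)) (if i == i0 then rest else bs i).
rewrite ltnS; apply: (IH bs') => //.
- rewrite (bigD1 i0) //= /bs' eqxx size_map.
  move: Nbs; rewrite (bigD1 i0) //= def_i0 /= addSn => -[<-].
  by congr (_ + _)%N; apply: eq_bigr => i /negbTE ->; rewrite size_map.
- move=> i; rewrite /bs'; have [-> | ne_i] := eqVneq i i0.
    apply: (fq_free_map_ker _ b); [by rewrite -def_i0 | exact: evXsubC_fq_linear |].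
    move=> z /(evXsubC_conj_ker _ _ _ (xi0 i0) b0) fixed_zb.
    by exists (z / b); rewrite ?divfK.
  apply: fq_free_map_inj => //; first exact: evXsubC_fq_linear.
  move=> z ker_z; have [// | z0] := eqVneq z 0.
  by case: (xi_nconj i0 i); [rewrite eq_sym | exact: evXsubC_conj_inj b0 z0 ker_z].
- move=> i z /mapP[w w_in ->]; rewrite -ev_g; apply: roots_g.
  by move: w_in; case: eqP => [-> | _ //]; rewrite def_i0 inE => ->; rewrite orbT.
Qed.

Definition deg_shift_lt p (o : int) (D : rat) : Prop :=
  p != 0 -> (((size p).-1)%:Z + o)%:~R < D.

Lemma deg_shift_lt_quotient (sg fj Rj Gj chij : {poly L}) n k D :
  (n < size Gj)%N -> (size Rj <= n)%N -> (0 < k)%N ->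
  skmul th sg fj = skmul th chij Gj + skmul th sg Rj ->
  deg_shift_lt (skmul th sg fj) 0 D -> deg_shift_lt sg (k%:Z - 1) D ->
  deg_shift_lt chij 0 D.
Proof.
move=> lt_nG le_Rn k_gt0 def_sf lt_sf lt_sg chi0.
have G0 : Gj != 0 by rewrite -size_poly_gt0; lia.
have := size_skmul _ _ chi0 G0.
rewrite -[skmul th chij Gj](addrK (skmul th sg Rj)) -def_sf => size_chiG.
have le_diff : ((size chij + size Gj).-1 <=
    maxn (size (skmul th sg fj)) (size (skmul th sg Rj)))%N.
  by rewrite -size_chiG -(size_polyN (skmul th sg Rj)) size_polyD.
have le_sR : (size (skmul th sg Rj) <= (size sg + size Rj).-1)%N := size_poly _ _.
have chi_gt0 : (0 < size chij)%N by rewrite size_poly_gt0.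
have [le_chi_sf | lt_sf_chi] := leqP (size chij + n) (size (skmul th sg fj)).
  apply: le_lt_trans (lt_sf _); last by rewrite -size_poly_gt0; lia.
  by rewrite ler_int; lia.
apply: le_lt_trans (lt_sg _); last by rewrite -size_poly_gt0; lia.
by rewrite ler_int; lia.
Qed.

End SkewPolynomials.

Arguments deg_shift_lt {L}.

Section Positions.
Variable s : nat.

Definition sf_idx (j : 'I_s) : 'I_(2 * s).+1 := inord j.
Definition sigma_idx : 'I_(2 * s).+1 := inord s.
Definition chi_idx (j : 'I_s) : 'I_(2 * s).+1 := inord (s.+1 + j)%N.

Lemma sf_idxE j : sf_idx j = j :> nat.
Proof. by rewrite /sf_idx inordK //; have := ltn_ord j; lia. Qed.

Lemma sigma_idxE : sigma_idx = s :> nat.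
Proof. by rewrite /sigma_idx inordK //; lia. Qed.

Lemma chi_idxE j : chi_idx j = (s.+1 + j)%N :> nat.
Proof. by rewrite /chi_idx inordK //; have := ltn_ord j; lia. Qed.

Variant position_spec (r : 'I_(2 * s).+1) : Type :=
  | PosSf j of r = sf_idx j
  | PosSigma of r = sigma_idx
  | PosChi j of r = chi_idx j.

Lemma positionP r : position_spec r.
Proof.
have lt_r := ltn_ord r.
have [lt_rs | le_sr] := ltnP r s.
  by apply: (@PosSf _ (Ordinal lt_rs)); apply: val_inj; rewrite /= sf_idxE.
have [eq_rs | ne_rs] := eqVneq (r : nat) s.
  by apply: PosSigma; apply: val_inj; rewrite /= sigma_idxE.
have lt_js : (r - s.+1 < s)%N by lia.
by apply: (@PosChi _ (Ordinal lt_js)); apply: val_inj; rewrite /= chi_idxE /=; lia.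
Qed.

Lemma sigma_sf_idx_neq j : sigma_idx != sf_idx j.
Proof. by rewrite -val_eqE /= sigma_idxE sf_idxE neq_ltn ltn_ord orbT. Qed.

Lemma chi_sf_idx_neq i j : chi_idx i != sf_idx j.
Proof. by rewrite -val_eqE /= chi_idxE sf_idxE; have := ltn_ord j; lia. Qed.

Lemma chi_sigma_idx_neq j : chi_idx j != sigma_idx.
Proof. by rewrite -val_eqE /= chi_idxE sigma_idxE; lia. Qed.

End Positions.

Arguments sf_idx {s}.
Arguments chi_idx {s}.
Arguments positionP {s}.

Section Vectors.
Variables (L : finFieldType) (th : {rmorphism L -> L}).
Variables (s k : nat) (sg : {poly L}) (f chi R G : 'I_s -> {poly L}).
Implicit Types i j : 'I_s.

Lemma rho_vec_lift j : rho_vec th sg f (lift (@ord_max s) j) = skmul th sg (f j).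
Proof. by rewrite /rho_vec /= /bump leqNgt ltn_ord add0n valK. Qed.

Lemma rho_vec_max : rho_vec th sg f ord_max = sg.
Proof. by rewrite /rho_vec /= insubF //= ltnn. Qed.

Lemma w_shift_lift j : w_shift k (lift (@ord_max s) j) = 0.
Proof. by rewrite /w_shift /= /bump leqNgt ltn_ord add0n ltn_eqF. Qed.

Lemma w_shift_max : w_shift k (@ord_max s) = k%:Z - 1.
Proof. by rewrite /w_shift /= eqxx. Qed.

Lemma rhochi_vec_sf j : rhochi_vec th sg f chi (sf_idx j) = skmul th sg (f j).
Proof. by rewrite /rhochi_vec /= sf_idxE valK. Qed.

Lemma rhochi_vec_sigma : rhochi_vec th sg f chi (sigma_idx s) = sg.
Proof. by rewrite /rhochi_vec /= sigma_idxE insubF ?ltnn ?eqxx. Qed.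

Lemma rhochi_vec_chi j : rhochi_vec th sg f chi (chi_idx j) = chi j.
Proof.
rewrite /rhochi_vec /= chi_idxE insubF; last by apply/negbTE; rewrite -leqNgt; lia.
by rewrite gtn_eqF ?addKn ?valK // leq_addr.
Qed.

Lemma v_shift_sf j : v_shift k (sf_idx j) = 0.
Proof. by rewrite /v_shift /= sf_idxE ltn_eqF. Qed.

Lemma v_shift_sigma : v_shift k (sigma_idx s) = k%:Z - 1.
Proof. by rewrite /v_shift /= sigma_idxE eqxx. Qed.

Lemma v_shift_chi j : v_shift k (chi_idx j) = 0.
Proof. by rewrite /v_shift /= chi_idxE gtn_eqF // ltnS leq_addr. Qed.

Lemma W_mat_sf i j : W_mat R G (sf_idx i) j = if i == j then -1 else 0.
Proof. by rewrite /W_mat /= sf_idxE ltn_ord. Qed.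

Lemma W_mat_sigma j : W_mat R G (sigma_idx s) j = R j.
Proof. by rewrite /W_mat /= sigma_idxE ltnn eqxx. Qed.

Lemma W_mat_chi i j : W_mat R G (chi_idx i) j = if i == j then G j else 0.
Proof.
by rewrite /W_mat /= chi_idxE ltnNge (ltnW (leq_addr _ _)) /= gtn_eqF ?addKn // leq_addr.
Qed.

Lemma rdeg_lt_rho_vec D : rdeg_lt (w_shift k) (rho_vec th sg f) D <->
  (forall j, deg_shift_lt (skmul th sg (f j)) 0 D) /\ deg_shift_lt sg (k%:Z - 1) D.
Proof.
split=> [lt_rho | [lt_sf lt_sg] r].
  split=> [j|]; [have := lt_rho (lift ord_max j) | have := lt_rho ord_max].
    by rewrite rho_vec_lift w_shift_lift.
  by rewrite rho_vec_max w_shift_max.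
case: (unliftP ord_max r) => [j|] ->.
  by rewrite rho_vec_lift w_shift_lift; apply: lt_sf.
by rewrite rho_vec_max w_shift_max; apply: lt_sg.
Qed.

Lemma rdeg_lt_rhochi_vec D : rdeg_lt (v_shift k) (rhochi_vec th sg f chi) D <->
  [/\ forall j, deg_shift_lt (skmul th sg (f j)) 0 D, deg_shift_lt sg (k%:Z - 1) D
    & forall j, deg_shift_lt (chi j) 0 D].
Proof.
split=> [lt_rhochi | [lt_sf lt_sg lt_chi] r].
  split=> [j||j]; [have := lt_rhochi (sf_idx j) | have := lt_rhochi (sigma_idx s)
    | have := lt_rhochi (chi_idx j)].
  - by rewrite rhochi_vec_sf v_shift_sf.
  - by rewrite rhochi_vec_sigma v_shift_sigma.
  - by rewrite rhochi_vec_chi v_shift_chi.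
case: (positionP r) => [j|| j] ->.
- by rewrite rhochi_vec_sf v_shift_sf; apply: lt_sf.
- by rewrite rhochi_vec_sigma v_shift_sigma; apply: lt_sg.
- by rewrite rhochi_vec_chi v_shift_chi; apply: lt_chi.
Qed.

Lemma vecmul_rhochi_W j : vecmul th (rhochi_vec th sg f chi) (W_mat R G) j =
  - skmul th sg (f j) + skmul th sg (R j) + skmul th (chi j) (G j).
Proof.
rewrite /vecmul (bigD1 (sf_idx j)) // (bigD1 (sigma_idx s)) ?sigma_sf_idx_neq //.
rewrite (bigD1 (chi_idx j)) ?chi_sf_idx_neq ?chi_sigma_idx_neq //=.
rewrite rhochi_vec_sf rhochi_vec_sigma rhochi_vec_chi W_mat_sf W_mat_sigma W_mat_chi.
rewrite !eqxx skmulrN1 big1 ?addr0 ?addrA // => r /andP[/andP[ne_sf ne_sigma] ne_chi].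
case: (positionP r) ne_sf ne_sigma ne_chi => [i|| i] ->; rewrite ?eqxx ?andbF //.
  by rewrite W_mat_sf; case: (eqVneq i j) => [-> | _]; rewrite ?eqxx ?skmulr0.
by rewrite W_mat_chi; case: (eqVneq i j) => [-> | _]; rewrite ?eqxx ?skmulr0.
Qed.

End Vectors.

Theorem lemma2 (L : finFieldType) (th : {rmorphism L -> L})
  (s l : nat) (nn : 'I_l -> nat) (k : nat)
  (xi : 'I_l -> L)
  (beta : 'I_s -> forall i : 'I_l, 'rV[L]_(nn i))
  (f : 'I_s -> {poly L})
  (c e : 'I_s -> forall i : 'I_l, 'rV[L]_(nn i))
  (tt : 'I_l -> nat) (a : forall i : 'I_l, 'rV[L]_(tt i))
  (B : 'I_s -> forall i : 'I_l, 'M[L]_(tt i, nn i))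
  (sigma : {poly L}) (G R chi : 'I_s -> {poly L}) :
  let n := (\sum_(i < l) nn i)%N in
  let D : rat := s%:R / s.+1%:R * (n%:R - k%:R) in
  let d : nat := `|(n%:Z + Num.ceil D)%R|%N in
  (0 < s)%N ->
  (forall i, 0 < nn i)%N ->
  (0 < k)%N -> (k <= n)%N ->
  (* xi : representatives of pairwise distinct nontrivial conjugacy classes *)
  (forall i, xi i != 0) ->
  (forall i j, i != j -> ~ conjugate th (xi i) (xi j)) ->
  (* each block of each beta_j has F_q-linearly independent entries *)
  (forall j i, fq_indep th [seq beta j i ord0 p | p <- enum 'I_(nn i)]) ->
  (* c is an HILRS codeword with message polynomials f_1..f_s of degree < k *)
  (forall j, (size (f j) <= k)%N) ->
  (forall j i, c j i = skevrow th (f j) (beta j i) (xi i)) ->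
  (* error weight t <= s/(s+1) (n-k) *)
  ((sr_wt th e)%:R <= D) ->
  (* error values a^(i), B_j^(i) *)
  (forall i, tt i = rkq th (fun p : 'I_s * 'I_(nn i) => e p.1 i ord0 p.2)) ->
  (forall i, fq_indep th [seq a i ord0 p | p <- enum 'I_(tt i)]) ->
  (forall j i r p, fixedb th (B j i r p)) ->
  (forall j i, e j i = a i *m B j i) ->
  (forall i, \rank (\mxrow_(j < s) B j i) = tt i) ->
  (* sigma : error-span polynomial *)
  sigma \is monic ->
  (forall i, skevrow th sigma (a i) (xi i) = 0) ->
  (forall g, g != 0 -> (forall i, skevrow th g (a i) (xi i) = 0) ->
     (size sigma <= size g)%N) ->
  (* G_j : minimal polynomials *)
  (forall j, G j \is monic) ->
  (forall j i, skevrow th (G j) (beta j i) (xi i) = 0) ->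
  (forall j g, g != 0 -> (forall i, skevrow th g (beta j i) (xi i) = 0) ->
     (size (G j) <= size g)%N) ->
  (* R_j : interpolation polynomials of y_j = c_j + e_j *)
  (forall j, (size (R j) <= n)%N) ->
  (forall j i, skevrow th (R j) (beta j i) (xi i) = c j i + e j i) ->
  (* chi_j *)
  (forall j, skmul th sigma (f j) = skmul th (chi j) (G j) + skmul th sigma (R j)) ->
  ((forall j, vecmul th (rhochi_vec th sigma f chi) (W_mat R G) j = 0)
    /\ rdeg_lt (@w_shift s k) (rho_vec th sigma f) D)
  <->
  ((forall j, rmod_zero th d (vecmul th (rhochi_vec th sigma f chi) (W_mat R G) j))
    /\ rdeg_lt (@v_shift s k) (rhochi_vec th sigma f chi) D).
Proof.
move=> n D d _ _ k_gt0 _ xi0 xi_nconj beta_free _ _ _ _ _ _ _ _ _ _ _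
  G_monic G_roots _ R_size _ def_chi.
have W0 j : vecmul th (rhochi_vec th sigma f chi) (W_mat R G) j = 0.
  by rewrite vecmul_rhochi_W def_chi; ring.
have G_size j : (n < size (G j))%N.
  pose bs i := [seq beta j i ord0 p | p <- enum 'I_(nn i)].
  have -> : n = (\sum_(i < l) size (bs i))%N.
    by apply: eq_bigr => i _; rewrite size_map size_enum_ord.
  apply: (@max_skew_poly_roots _ th _ xi xi0 xi_nconj) => [i | i z /mapP[p _ ->] | ].
  - exact: fq_indep_free (beta_free j i).
  - by have /matrixP/(_ ord0 p) := G_roots j i; rewrite !mxE.
  - exact: monic_neq0.
split=> [[_ /rdeg_lt_rho_vec[lt_sf lt_sg]] | [_ /rdeg_lt_rhochi_vec[lt_sf lt_sg _]]].
  split=> [j | ]; first by exists 0; rewrite W0 skmul0r.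
  apply/rdeg_lt_rhochi_vec; split=> // j.
  exact: deg_shift_lt_quotient (G_size j) (R_size j) k_gt0 (def_chi j) (lt_sf j) lt_sg.
by split=> //; apply/rdeg_lt_rho_vec.
Qed.
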